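(* Let $E$ be a directed graph and let the graph inverse semigroup $G(E)$ carry a Hausdorff topology making it a topological semigroup. Then $G(E)$ embeds (as a subsemigroup and topological subspace) into a compact topological semigroup $S$ if and only if $G(E)$ is compact.
   Context: All spaces are Hausdorff. A directed graph $E=(E^0,E^1,r,s)$ has vertices $E^0$, edges $E^1$, and source/range maps $s,r:E^1\to E^0$; paths are vertices and sequences of edges $e_1\ldots e_n$ with $r(e_i)=s(e_{i+1})$. The graph inverse semigroup $G(E)$ is the semigroup with zero $0$ generated by $E^0$, $E^1$, $E^{-1}=\{e^{-1}\mid e\in E^1\}$ subject to: for $a,b\in E^0$, $e,f\in E^1$: $ab=a$ if $a=b$, else $0$; $s(e)e=er(e)=e$; $e^{-1}s(e)=r(e)e^{-1}=e^{-1}$; $e^{-1}f=r(e)$ if $e=f$, else $0$. Non-zero elements are uniquely $uv^{-1}$ with $u,v$ paths and $r(u)=r(v)$. *)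

From Stdlib Require Import List ClassicalEpsilon.
Import ListNotations.
Set Implicit Arguments.

Section GraphInverseSemigroup.
Variables (V Ed : Type) (s r : Ed -> V).

(* A path is a pair (x, [e1;...;en]): the vertex x when n = 0, otherwise the
   edge sequence e1...en starting at x = s(e1).  *)
Definition path := (V * list Ed)%type.

Fixpoint walk (x : V) (l : list Ed) : Prop :=
  match l with [] => True | e :: l' => s e = x /\ walk (r e) l' end.

Fixpoint rngf (x : V) (l : list Ed) : V :=
  match l with [] => x | e :: l' => rngf (r e) l' end.

Definition valid_path (p : path) : Prop := walk (fst p) (snd p).
Definition rng (p : path) : V := rngf (fst p) (snd p).

(* raw elements: None = 0, Some (u, v) = u v^{-1} *)
Definition raw := option (path * path).

Definition valid_raw (a : raw) : Prop :=
  match a with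
  | None => True
  | Some (u, v) => valid_path u /\ valid_path v /\ rng u = rng v
  end.

Definition prefix (v w : path) : Prop :=
  fst v = fst w /\ exists p, snd w = snd v ++ p.

Definition dec (P : Prop) : bool :=
  if excluded_middle_informative P then true else false.

(* (u v^{-1}) (w z^{-1}) =  u p z^{-1}       if w = v p,
                            u (z q)^{-1}     if v = w q,
                            0                otherwise. *)
Definition mulraw (a b : raw) : raw :=
  match a, b with
  | Some (u, v), Some (w, z) =>
      if dec (prefix v w) then
        Some ((fst u, snd u ++ skipn (length (snd v)) (snd w)), z)
      else if dec (prefix w v) then
        Some (u, (fst z, snd z ++ skipn (length (snd w)) (snd v)))
      else None
  | _, _ => None
  end.

Lemma walk_app x l1 l2 : walk x (l1 ++ l2) <-> walk x l1 /\ walk (rngf x l1) l2.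
Proof.
  revert x; induction l1 as [|e l1 IH]; intro x; simpl.
  - tauto.
  - rewrite IH; tauto.
Qed.

Lemma rngf_app x l1 l2 : rngf x (l1 ++ l2) = rngf (rngf x l1) l2.
Proof. revert x; induction l1; intro x; simpl; auto. Qed.

Lemma skipn_prefix (l1 p : list Ed) : skipn (length l1) (l1 ++ p) = p.
Proof. induction l1; simpl; auto. Qed.

Lemma dec_true P : dec P = true -> P.
Proof. unfold dec; destruct (excluded_middle_informative P); congruence. Qed.

Lemma mulraw_valid a b : valid_raw a -> valid_raw b -> valid_raw (mulraw a b).
Proof.
  destruct a as [[u v]|], b as [[w z]|]; simpl; auto.
  intros [Hu [Hv Euv]] [Hw [Hz Ewz]].
  destruct (dec (prefix v w)) eqn:D1.
  - apply dec_true in D1. destruct D1 as [E1 [p Ep]].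
    destruct u as [xu lu], v as [xv lv], w as [xw lw], z as [xz lz].
    unfold valid_path, rng in *; simpl in *. subst xw lw.
    rewrite skipn_prefix.
    apply walk_app in Hw as [_ Hp].
    repeat split; auto.
    + apply walk_app; split; auto. rewrite <- Euv in Hp; auto.
    + unfold rng; simpl. rewrite rngf_app, Euv, <- Ewz, rngf_app; auto.
  - destruct (dec (prefix w v)) eqn:D2; simpl; auto.
    apply dec_true in D2. destruct D2 as [E1 [p Ep]].
    destruct u as [xu lu], v as [xv lv], w as [xw lw], z as [xz lz].
    unfold valid_path, rng in *; simpl in *. subst xv lv.
    rewrite skipn_prefix.
    apply walk_app in Hv as [_ Hp].
    repeat split; auto.
    + apply walk_app; split; auto. rewrite <- Ewz; auto.
    + rewrite Euv, rngf_app, Ewz, rngf_app; auto.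
Qed.

Definition GE : Type := { a : raw | valid_raw a }.

Definition GE_mul (a b : GE) : GE :=
  exist _ (mulraw (proj1_sig a) (proj1_sig b))
          (mulraw_valid _ _ (proj2_sig a) (proj2_sig b)).

End GraphInverseSemigroup.

Section Topology.
Variable X : Type.
Variable O : (X -> Prop) -> Prop.

Definition is_topology : Prop :=
  O (fun _ => True) /\ O (fun _ => False) /\
  (forall U W, O U -> O W -> O (fun x => U x /\ W x)) /\
  (forall (I : Type) (U : I -> X -> Prop), (forall i, O (U i)) ->
      O (fun x => exists i, U i x)).

Definition hausdorff : Prop :=
  forall x y, x <> y -> exists U W, O U /\ O W /\ U x /\ W y /\
                                  (forall z, U z -> W z -> False).

Definition compact : Prop :=
  forall (I : Type) (U : I -> X -> Prop), (forall i, O (U i)) ->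
    (forall x, exists i, U i x) ->
    exists l : list I, forall x, exists i, In i l /\ U i x.

Definition mul_continuous (m : X -> X -> X) : Prop :=
  forall x y W, O W -> W (m x y) ->
    exists U1 U2, O U1 /\ O U2 /\ U1 x /\ U2 y /\
      (forall a b, U1 a -> U2 b -> W (m a b)).

Definition topological_semigroup (m : X -> X -> X) : Prop :=
  is_topology /\ hausdorff /\
  (forall a b c, m a (m b c) = m (m a b) c) /\ mul_continuous m.
End Topology.

Definition embeds_into_compact_semigroup (X : Type) (OX : (X -> Prop) -> Prop)
    (mX : X -> X -> X) : Prop :=
  exists (S : Type) (OS : (S -> Prop) -> Prop) (mS : S -> S -> S) (f : X -> S),
    topological_semigroup OS mS /\ compact OS /\
    (forall x y, f x = f y -> x = y) /\
    (forall x y, f (mX x y) = mS (f x) (f y)) /\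
    (forall W, OS W -> OX (fun x => W (f x))) /\
    (forall U, OX U -> exists W, OS W /\ forall x, U x <-> W (f x)).

From Stdlib Require Import List Classical ClassicalEpsilon ProofIrrelevance Lia.
Import ListNotations.

(* Only the forward implication needs work: if G(E) embeds into a compact semigroup S, it
   suffices that its image be closed in S, for then G(E) is homeomorphic to a compact set.
   Suppose x adheres to the image without lying in it. Refining the trace of the
   neighbourhood filter of x by compactness, we may assume that along the filter, writing
   g = u v^{-1}, the images of u, u^{-1}, v, v^{-1} converge to p, q, p', q'. Then
   q p = q' p' is a limit of the vertices r(u) = u^{-1} u, and q p <> 0 since
   x = p (q p) (q x). Distinct vertices are orthogonal idempotents, so q p is itself a
   vertex w. Vertices are isolated in every Hausdorff semigroup topology on G(E), hence
   eventually u_g^{-1} u_h = w = v_g^{-1} v_h, i.e. g = h: the filter is eventually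
   constant and x lies in the image after all. *)

Set Implicit Arguments.
Unset Strict Implicit.

Record proper_filter (X : Type) (F : (X -> Prop) -> Prop) : Prop := {
  filterT : F (fun _ => True);
  filterS : forall A B : X -> Prop, F A -> (forall x, A x -> B x) -> F B;
  filterI : forall A B : X -> Prop, F A -> F B -> F (fun x => A x /\ B x);
  filter_ex : forall A : X -> Prop, F A -> exists x, A x }.

Lemma filter_all (X I : Type) (F : (X -> Prop) -> Prop) (A : I -> X -> Prop) (l : list I) :
  proper_filter F -> (forall i, F (A i)) -> F (fun x => forall i, In i l -> A i x).
Proof.
  intros HF HA; induction l as [|i l IH].
  - apply (filterS HF (filterT HF)). intros x _ i [].
  - apply (filterS HF (filterI HF (HA i) IH)). intros x [Hi Hl] j [<-|Hj]; auto.
Qed.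

Section Limits.
Variables (X T : Type) (OT : (T -> Prop) -> Prop).

Definition tends (F : (X -> Prop) -> Prop) (phi : X -> T) (t : T) : Prop :=
  forall W, OT W -> W t -> F (fun x => W (phi x)).

Definition adherent (phi : X -> T) (t : T) : Prop :=
  forall W, OT W -> W t -> exists x, W (phi x).

Definition trace_nbhd (phi : X -> T) (t : T) (A : X -> Prop) : Prop :=
  exists W, OT W /\ W t /\ forall x, W (phi x) -> A x.

Lemma trace_nbhd_proper phi t :
  is_topology OT -> adherent phi t -> proper_filter (trace_nbhd phi t).
Proof.
  intros (Hfull & _ & Hmeet & _) Ht. split.
  - exists (fun _ => True). auto.
  - intros A B (W & OW & Wt & HW) HAB. exists W. auto.
  - intros A B (W1 & OW1 & Wt1 & H1) (W2 & OW2 & Wt2 & H2).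
    exists (fun y => W1 y /\ W2 y). split; [exact (Hmeet _ _ OW1 OW2)|].
    split; [auto|]. intros x [Hx1 Hx2]. auto.
  - intros A (W & OW & Wt & HW). destruct (Ht W OW Wt) as [x Wx]. eauto.
Qed.

Lemma tends_trace_nbhd phi t : tends (trace_nbhd phi t) phi t.
Proof. intros W OW Wt. exists W. auto. Qed.

Lemma tends_adherent (F : (X -> Prop) -> Prop) phi t :
  proper_filter F -> tends F phi t -> adherent phi t.
Proof. intros HF Ht W OW Wt. exact (filter_ex HF (Ht W OW Wt)). Qed.

Lemma tends_finer F F' phi t : (forall A, F A -> F' A) -> tends F phi t -> tends F' phi t.
Proof. intros HFF' Ht W OW Wt. auto. Qed.

Lemma tends_ext F phi psi t :
  proper_filter F -> (forall x, phi x = psi x) -> tends F phi t -> tends F psi t.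
Proof.
  intros HF E Ht W OW Wt. apply (filterS HF (Ht W OW Wt)). intro x. rewrite E. auto.
Qed.

Lemma tends_unique F phi t1 t2 :
  hausdorff OT -> proper_filter F -> tends F phi t1 -> tends F phi t2 -> t1 = t2.
Proof.
  intros HH HF H1 H2. apply NNPP; intro Hne.
  destruct (HH t1 t2 Hne) as (U & W & OU & OW & Ut1 & Wt2 & Hdisj).
  destruct (filter_ex HF (filterI HF (H1 U OU Ut1) (H2 W OW Wt2))) as [x [Ux Wx]].
  exact (Hdisj _ Ux Wx).
Qed.

Lemma tends_eventually_ne F phi t c :
  hausdorff OT -> proper_filter F -> tends F phi t -> t <> c -> F (fun x => phi x <> c).
Proof.
  intros HH HF Ht Hne.
  destruct (HH t c Hne) as (U & W & OU & OW & Ut & Wc & Hdisj).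
  apply (filterS HF (Ht U OU Ut)). intros x Ux E. rewrite E in Ux. exact (Hdisj _ Ux Wc).
Qed.

Lemma tends_eventually_const F phi t c A :
  hausdorff OT -> proper_filter F -> F A -> (forall x, A x -> phi x = c) ->
  tends F phi t -> t = c.
Proof.
  intros HH HF HA Hc Ht. apply NNPP; intro Hne.
  destruct (filter_ex HF (filterI HF HA (tends_eventually_ne HH HF Ht Hne))) as [x [Ax Hx]].
  exact (Hx (Hc x Ax)).
Qed.

Lemma compact_cluster (F : (X -> Prop) -> Prop) (phi : X -> T) : compact OT -> proper_filter F ->
  exists t, forall W A, OT W -> W t -> F A -> exists x, A x /\ W (phi x).
Proof.
  intros HC HF. apply NNPP; intro Hno.
  set (I := {WA : (T -> Prop) * (X -> Prop) |
              OT (fst WA) /\ F (snd WA) /\ forall x, snd WA x -> ~ fst WA (phi x)}).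
  destruct (HC I (fun i => fst (proj1_sig i))) as [l Hl].
  - intro i. exact (proj1 (proj2_sig i)).
  - intro t. apply NNPP; intro Ht. apply Hno. exists t. intros W A OW Wt FA.
    apply NNPP; intro Hx.
    assert (Hi : OT (fst (W, A)) /\ F (snd (W, A)) /\
                 forall x, snd (W, A) x -> ~ fst (W, A) (phi x))
      by (simpl; repeat split; auto; intros x Ax Wx; apply Hx; eauto).
    apply Ht. exists (exist _ (W, A) Hi). exact Wt.
  - destruct (filter_ex HF (filter_all (A := fun i : I => snd (proj1_sig i)) l HF
                (fun i => proj1 (proj2 (proj2_sig i))))) as [x Hx].
    destruct (Hl (phi x)) as [i [Hi Wi]].
    exact (proj2 (proj2 (proj2_sig i)) x (Hx i Hi) Wi).
Qed.

Lemma cluster_refine (F : (X -> Prop) -> Prop) (phi : X -> T) t :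
  is_topology OT -> proper_filter F ->
  (forall W A, OT W -> W t -> F A -> exists x, A x /\ W (phi x)) ->
  exists F', proper_filter F' /\ (forall A, F A -> F' A) /\ tends F' phi t.
Proof.
  intros (Hfull & _ & Hmeet & _) HF Ht.
  exists (fun B => exists A W, F A /\ OT W /\ W t /\ forall x, A x -> W (phi x) -> B x).
  split; [split|split].
  - exists (fun _ => True), (fun _ => True). repeat split; auto. exact (filterT HF).
  - intros A B (A' & W & FA' & OW & Wt & H) HAB. exists A', W. repeat split; auto.
  - intros B1 B2 (A1 & W1 & FA1 & OW1 & Wt1 & H1) (A2 & W2 & FA2 & OW2 & Wt2 & H2).
    exists (fun x => A1 x /\ A2 x), (fun y => W1 y /\ W2 y).
    split; [exact (filterI HF FA1 FA2)|]. split; [exact (Hmeet _ _ OW1 OW2)|].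
    split; [auto|]. intros x [] []. auto.
  - intros B (A & W & FA & OW & Wt & H). destruct (Ht W A OW Wt FA) as [x [Ax Wx]]. eauto.
  - intros A FA. exists A, (fun _ => True). repeat split; auto.
  - intros W OW Wt. exists (fun _ => True), W. repeat split; auto. exact (filterT HF).
Qed.

Lemma compact_refine_list (F : (X -> Prop) -> Prop) (l : list (X -> T)) :
  is_topology OT -> compact OT -> proper_filter F ->
  exists F', proper_filter F' /\ (forall A, F A -> F' A) /\
             forall phi, In phi l -> exists t, tends F' phi t.
Proof.
  intros HT HC HF. induction l as [|phi l IH].
  - exists F. split; [exact HF|]. split; [auto|]. intros phi [].
  - destruct IH as (F1 & HF1 & HFF1 & Hl).
    destruct (compact_cluster phi HC HF1) as [t Ht].
    destruct (cluster_refine HT HF1 Ht) as (F2 & HF2 & HF12 & Hphi).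
    exists F2. split; [exact HF2|]. split; [auto|].
    intros psi [<-|Hpsi]; [eauto|].
    destruct (Hl psi Hpsi) as [t' Ht']. exists t'. exact (tends_finer HF12 Ht').
Qed.

End Limits.

Lemma adherent_comp (X Y T : Type) (OT : (T -> Prop) -> Prop) (f : Y -> T) (k : X -> Y) t :
  adherent OT (fun x => f (k x)) t -> adherent OT f t.
Proof. intros Ht W OW Wt. destruct (Ht W OW Wt) as [x Hx]. eauto. Qed.

Lemma mul_continuous_flip (T : Type) (OT : (T -> Prop) -> Prop) (m : T -> T -> T) :
  mul_continuous OT m -> mul_continuous OT (fun x y => m y x).
Proof.
  intros HM x y W OW Wyx.
  destruct (HM y x W OW Wyx) as (U1 & U2 & O1 & O2 & H1 & H2 & H12).
  exists U2, U1. repeat split; auto.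
Qed.

Section ContinuousMultiplication.
Variables (X T : Type) (OT : (T -> Prop) -> Prop) (m : T -> T -> T).
Hypotheses (HH : hausdorff OT) (HM : mul_continuous OT m).

Lemma tends_mul_pairs (F : (X -> Prop) -> Prop) (phi psi : X -> T) a b W :
  tends OT F phi a -> tends OT F psi b -> OT W -> W (m a b) ->
  exists A B, F A /\ F B /\ forall x y, A x -> B y -> W (m (phi x) (psi y)).
Proof.
  intros Ha Hb OW Wab.
  destruct (HM OW Wab) as (U1 & U2 & O1 & O2 & H1 & H2 & H12).
  exists (fun x => U1 (phi x)), (fun y => U2 (psi y)). auto.
Qed.

Lemma tends_mul (F : (X -> Prop) -> Prop) (phi psi : X -> T) a b :
  proper_filter F -> tends OT F phi a -> tends OT F psi b ->
  tends OT F (fun x => m (phi x) (psi x)) (m a b).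
Proof.
  intros HF Ha Hb W OW Wab.
  destruct (tends_mul_pairs Ha Hb OW Wab) as (A & B & FA & FB & HAB).
  apply (filterS HF (filterI HF FA FB)). intros x [Ax Bx]. auto.
Qed.

Lemma tends_orthogonal_idempotents (F : (X -> Prop) -> Prop) (e : X -> T) z t :
  proper_filter F -> (forall x, m (e x) (e x) = e x) ->
  (forall x y, e x <> e y -> m (e x) (e y) = z) ->
  tends OT F e t -> t <> z -> exists x, t = e x.
Proof.
  intros HF Hidem Horth Ht Htz.
  assert (Htt : m t t = t).
  { apply (tends_unique HH HF (phi := e)); [|exact Ht].
    apply (tends_ext HF Hidem). exact (tends_mul HF Ht Ht). }
  apply NNPP; intro Hne. rewrite <- Htt in Htz.
  destruct (HH Htz) as (U & U' & OU & OU' & Ut & Uz & Hdisj).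
  destruct (tends_mul_pairs Ht Ht OU Ut) as (A & B & FA & FB & HAB).
  destruct (filter_ex HF FA) as [x Ax].
  assert (Hfar : F (fun y => e y <> e x)).
  { apply (tends_eventually_ne HH HF Ht). intro E. apply Hne. eauto. }
  destruct (filter_ex HF (filterI HF FB Hfar)) as [y [By Hy]].
  apply (Hdisj (m (e x) (e y))); [auto|]. rewrite Horth; auto.
Qed.

Lemma adherent_mul (mX : X -> X -> X) (f : X -> T) a b :
  (forall x y, f (mX x y) = m (f x) (f y)) ->
  adherent OT f a -> adherent OT f b -> adherent OT f (m a b).
Proof.
  intros Hhom Ha Hb W OW Wab.
  destruct (HM OW Wab) as (U1 & U2 & O1 & O2 & H1 & H2 & H12).
  destruct (Ha U1 O1 H1) as [x Hx]. destruct (Hb U2 O2 H2) as [y Hy].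
  exists (mX x y). rewrite Hhom. auto.
Qed.

Lemma adherent_left_zero (mX : X -> X -> X) (f : X -> T) z t :
  (forall x y, f (mX x y) = m (f x) (f y)) -> (forall x, mX z x = z) ->
  adherent OT f t -> m (f z) t = f z.
Proof.
  intros Hhom Hz Ht. apply NNPP; intro Hne.
  destruct (HH Hne) as (U & U' & OU & OU' & Ut & Uz & Hdisj).
  destruct (HM OU Ut) as (U1 & U2 & O1 & O2 & H1 & H2 & H12).
  destruct (Ht U2 O2 H2) as [x Hx].
  apply (Hdisj (f z)); [|exact Uz]. rewrite <- (Hz x), Hhom. auto.
Qed.

Lemma sandwich_nbhd a t0 z : m (m a t0) a <> z ->
  exists U, OT U /\ U t0 /\ forall t, U t -> m (m a t) a <> z.
Proof.
  intros Hne.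
  destruct (HH Hne) as (W & W' & OW & OW' & Wt0 & Wz & Hdisj).
  destruct (HM OW Wt0) as (U1 & U2 & O1 & O2 & H1 & H2 & H12).
  destruct (HM O1 H1) as (U3 & U4 & O3 & O4 & H3 & H4 & H34).
  exists U4. split; [exact O4|]. split; [exact H4|].
  intros t Ut E. apply (Hdisj z); [rewrite <- E; auto | exact Wz].
Qed.

Lemma nbhd_mul_r_neq a b z : is_topology OT -> m a b = b -> a <> b -> b <> z ->
  exists U, OT U /\ U a /\ forall t, U t -> m t b <> t /\ m t b <> z.
Proof.
  intros (_ & _ & Hmeet & _) Hab Hneab Hnebz.
  destruct (HH Hneab) as (Va & Vb & OVa & OVb & Vaa & Vbb & Dab).
  destruct (HH Hnebz) as (Wb & Wz & OWb & OWz & Wbb & Wzz & Dbz).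
  assert (Hb : Vb (m a b) /\ Wb (m a b)) by (rewrite Hab; auto).
  destruct (HM (Hmeet _ _ OVb OWb) Hb) as (U1 & U2 & O1 & O2 & H1 & H2 & H12).
  exists (fun t => U1 t /\ Va t). split; [exact (Hmeet _ _ O1 OVa)|]. split; [auto|].
  intros t [U1t Vat]. destruct (H12 t b U1t H2) as [Vtb Wtb]. split; intro E.
  - rewrite E in Vtb. exact (Dab t Vat Vtb).
  - rewrite E in Wtb. exact (Dbz z Wtb Wzz).
Qed.

End ContinuousMultiplication.

Lemma adherent_right_zero (X T : Type) (OT : (T -> Prop) -> Prop) (m : T -> T -> T)
    (mX : X -> X -> X) (f : X -> T) z t :
  hausdorff OT -> mul_continuous OT m ->
  (forall x y, f (mX x y) = m (f x) (f y)) -> (forall x, mX x z = z) ->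
  adherent OT f t -> m t (f z) = f z.
Proof.
  intros HH HM Hhom.
  exact (adherent_left_zero HH (mul_continuous_flip HM) (mX := fun x y => mX y x)
           (fun x y => Hhom y x)).
Qed.

Lemma compact_of_closed_embedding (X T : Type) (OX : (X -> Prop) -> Prop)
    (OT : (T -> Prop) -> Prop) (f : X -> T) :
  compact OT ->
  (forall U, OX U -> exists W, OT W /\ forall x, U x <-> W (f x)) ->
  (forall t, adherent OT f t -> exists x, f x = t) ->
  compact OX.
Proof.
  intros HC Hsub Hclosed I U HU Hcov.
  (* Cover T by the open sets whose trace on X lies in some U i, together with the open
     sets missing the image of f. *)
  set (J := {j : option I * (T -> Prop) | OT (snd j) /\
              match fst j with
              | Some i => forall x, snd j (f x) -> U i x
              | None => forall x, ~ snd j (f x)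
              end}).
  destruct (HC J (fun j => snd (proj1_sig j))) as [l Hl].
  - intro j. exact (proj1 (proj2_sig j)).
  - intro t. destruct (classic (adherent OT f t)) as [Ht | Ht].
    + destruct (Hclosed t Ht) as [x <-]. destruct (Hcov x) as [i Hi].
      destruct (Hsub (U i) (HU i)) as [W [OW HW]].
      exists (exist _ (Some i, W) (conj OW (fun x' => proj2 (HW x')))). apply HW, Hi.
    + assert (exists W, OT W /\ W t /\ forall x, ~ W (f x)) as (W & OW & Wt & HW).
      { apply NNPP; intro Hn; apply Ht. intros W OW Wt. apply NNPP; intro Hx.
        apply Hn. exists W. repeat split; auto. intros x Wx. apply Hx. eauto. }
      exists (exist _ (None, W) (conj OW HW)). exact Wt.
  - exists (flat_map (fun j : J => match fst (proj1_sig j) with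
                                   | Some i => [i] | None => [] end) l).
    intro x. destruct (Hl (f x)) as [j [Hj Wj]].
    destruct j as [[[i|] W] [OW HW]]; simpl in Wj.
    + exists i. split; [|exact (HW x Wj)].
      apply in_flat_map. eexists. split; [exact Hj | left; reflexivity].
    + exfalso. exact (HW x Wj).
Qed.

Lemma dec_eq_true (P : Prop) : P -> dec P = true.
Proof.
  intro H. unfold dec.
  destruct (excluded_middle_informative P); [reflexivity | contradiction].
Qed.

Lemma dec_eq_false (P : Prop) : ~ P -> dec P = false.
Proof.
  intro H. unfold dec.
  destruct (excluded_middle_informative P); [contradiction | reflexivity].
Qed.

Section GraphInverseSemigroup.
Variables (V Ed : Type) (s r : Ed -> V).
Local Notation P := (path V Ed).
Local Notation G := (GE s r).

Lemma mulraw_prefix_l {u z : P} (v w : P) l : fst v = fst w -> snd w = snd v ++ l ->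
  mulraw (Some (u, v)) (Some (w, z)) = Some ((fst u, snd u ++ l), z).
Proof.
  intros E1 E2. simpl. rewrite dec_eq_true by (split; eauto).
  rewrite E2, skipn_prefix. reflexivity.
Qed.

Lemma mulraw_prefix_r {u z : P} (v w : P) l :
  fst v = fst w -> snd v = snd w ++ l -> l <> [] ->
  mulraw (Some (u, v)) (Some (w, z)) = Some (u, (fst z, snd z ++ l)).
Proof.
  intros E1 E2 Hl. simpl. rewrite dec_eq_false.
  - rewrite dec_eq_true by (split; eauto). rewrite E2, skipn_prefix. reflexivity.
  - intros [_ [l' Hl']]. apply Hl. rewrite E2, <- app_assoc in Hl'.
    apply (f_equal (@length Ed)) in Hl'. rewrite !length_app in Hl'.
    destruct l; [reflexivity | simpl in Hl'; lia].
Qed.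

Lemma mulraw_incomparable {u z : P} (v w : P) : ~ prefix v w -> ~ prefix w v ->
  mulraw (Some (u, v)) (Some (w, z)) = None.
Proof. intros H1 H2. simpl. rewrite (dec_eq_false H1), (dec_eq_false H2). reflexivity. Qed.

Lemma GE_mul_val (g h : G) : proj1_sig (GE_mul g h) = mulraw (proj1_sig g) (proj1_sig h).
Proof. reflexivity. Qed.

Lemma GE_ext (g h : G) : proj1_sig g = proj1_sig h -> g = h.
Proof. destruct g as [a Ha], h as [b Hb]; simpl; intros ->. f_equal. apply proof_irrelevance. Qed.

Definition zero : G := exist _ None I.

Definition vertex (w : V) : G := exist _ (Some ((w, []), (w, []))) (conj I (conj I eq_refl)).

Definition edge_idem (e : Ed) : G :=
  exist _ (Some ((s e, [e]), (s e, [e]))) (conj (conj eq_refl I) (conj (conj eq_refl I) eq_refl)).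

Lemma zero_mul (g : G) : GE_mul zero g = zero.
Proof. apply GE_ext. reflexivity. Qed.

Lemma mul_zero (g : G) : GE_mul g zero = zero.
Proof. apply GE_ext. destruct g as [[[u v]|] Hg]; reflexivity. Qed.

Lemma vertex_neq_zero w : vertex w <> zero.
Proof. intro E. apply (f_equal (@proj1_sig _ _)) in E. discriminate. Qed.

Lemma edge_idem_neq_zero e : edge_idem e <> zero.
Proof. intro E. apply (f_equal (@proj1_sig _ _)) in E. discriminate. Qed.

Lemma vertex_neq_edge_idem e w : vertex w <> edge_idem e.
Proof. intro E. apply (f_equal (@proj1_sig _ _)) in E. discriminate. Qed.

Lemma vertex_mul (g : G) p q : proj1_sig g = Some (p, q) -> GE_mul (vertex (fst p)) g = g.
Proof.
  intro Eg. apply GE_ext. rewrite GE_mul_val, Eg. cbn [proj1_sig vertex edge_idem].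
  rewrite (mulraw_prefix_l (l := snd p)) by reflexivity. destruct p. reflexivity.
Qed.

Lemma vertex_mul_ne (g : G) p q w : proj1_sig g = Some (p, q) -> fst p <> w ->
  GE_mul (vertex w) g = zero.
Proof.
  intros Eg Hne. apply GE_ext. rewrite GE_mul_val, Eg. cbn [proj1_sig vertex edge_idem].
  apply mulraw_incomparable; intros [E _]; simpl in E; congruence.
Qed.

Lemma mul_vertex (g : G) p q : proj1_sig g = Some (p, q) -> GE_mul g (vertex (fst q)) = g.
Proof.
  intro Eg. apply GE_ext. rewrite GE_mul_val, Eg. cbn [proj1_sig vertex edge_idem].
  destruct q as [x [|e l]].
  - rewrite (mulraw_prefix_l (l := [])) by reflexivity.
    destruct p. simpl. rewrite app_nil_r. reflexivity.
  - rewrite (mulraw_prefix_r (l := e :: l)) by (reflexivity || discriminate). reflexivity.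
Qed.

Lemma mul_vertex_ne (g : G) p q w : proj1_sig g = Some (p, q) -> fst q <> w ->
  GE_mul g (vertex w) = zero.
Proof.
  intros Eg Hne. apply GE_ext. rewrite GE_mul_val, Eg. cbn [proj1_sig vertex edge_idem].
  apply mulraw_incomparable; intros [E _]; simpl in E; congruence.
Qed.

Lemma vertex_idem w : GE_mul (vertex w) (vertex w) = vertex w.
Proof. exact (vertex_mul (g := vertex w) (p := (w, [])) (q := (w, [])) eq_refl). Qed.

Lemma vertex_mul_vertex_ne a b : a <> b -> GE_mul (vertex a) (vertex b) = zero.
Proof.
  intro Hne. apply (vertex_mul_ne (g := vertex b) (p := (b, [])) (q := (b, [])) eq_refl).
  simpl. congruence.
Qed.

Lemma vertex_mul_edge_idem e : GE_mul (vertex (s e)) (edge_idem e) = edge_idem e.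
Proof. exact (vertex_mul (g := edge_idem e) (p := (s e, [e])) (q := (s e, [e])) eq_refl). Qed.

Lemma edge_idem_mul_vertex e : GE_mul (edge_idem e) (vertex (s e)) = edge_idem e.
Proof. exact (mul_vertex (g := edge_idem e) (p := (s e, [e])) (q := (s e, [e])) eq_refl). Qed.

Lemma vertex_sandwich_neq_zero (g : G) w : GE_mul (GE_mul (vertex w) g) (vertex w) <> zero ->
  exists p q, proj1_sig g = Some (p, q) /\ fst p = w /\ fst q = w.
Proof.
  intro Hnz. destruct (proj1_sig g) as [[p q]|] eqn:Eg.
  2:{ exfalso. apply Hnz. apply GE_ext. rewrite !GE_mul_val, Eg. reflexivity. }
  exists p, q. split; [reflexivity|].
  assert (Ep : fst p = w).
  { apply NNPP; intro Hne. apply Hnz. rewrite (vertex_mul_ne Eg Hne). apply zero_mul. }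
  split; [exact Ep|]. subst w. apply NNPP; intro Hne. apply Hnz.
  rewrite (vertex_mul Eg). exact (mul_vertex_ne Eg Hne).
Qed.

Lemma mul_edge_idem (g : G) p q e : proj1_sig g = Some (p, q) -> fst q = s e -> snd q <> [] ->
  GE_mul g (edge_idem e) = g \/ GE_mul g (edge_idem e) = zero.
Proof.
  intros Eg Eq Hq. destruct q as [x [|e' l]]; [contradiction|]. simpl in Eq. subst x.
  destruct (classic (e' = e)) as [<- | Hne].
  - left. apply GE_ext. rewrite GE_mul_val, Eg. cbn [proj1_sig vertex edge_idem].
    destruct l as [|e'' l].
    + rewrite (mulraw_prefix_l (l := [])) by reflexivity.
      destruct p. simpl. rewrite app_nil_r. reflexivity.
    + rewrite (mulraw_prefix_r (l := e'' :: l)) by (reflexivity || discriminate). reflexivity.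
  - right. apply GE_ext. rewrite GE_mul_val, Eg. cbn [proj1_sig vertex edge_idem].
    apply mulraw_incomparable; intros [_ [l' Hl']]; simpl in Hl'; congruence.
Qed.

Lemma edge_idem_mul (g : G) p q e : proj1_sig g = Some (p, q) -> fst p = s e -> snd p <> [] ->
  GE_mul (edge_idem e) g = g \/ GE_mul (edge_idem e) g = zero.
Proof.
  intros Eg Ep Hp. destruct p as [x [|e' l]]; [contradiction|]. simpl in Ep. subst x.
  destruct (classic (e' = e)) as [<- | Hne].
  - left. apply GE_ext. rewrite GE_mul_val, Eg. cbn [proj1_sig vertex edge_idem].
    rewrite (mulraw_prefix_l (l := l)) by reflexivity. reflexivity.
  - right. apply GE_ext. rewrite GE_mul_val, Eg. cbn [proj1_sig vertex edge_idem].
    apply mulraw_incomparable; intros [_ [l' Hl']]; simpl in Hl'; congruence.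
Qed.

Lemma valid_path_at_sink (p : P) : valid_path s r p -> ~ (exists e, s e = fst p) -> snd p = [].
Proof. destruct p as [x [|e l]]; simpl; [reflexivity | intros [He _] Hsink; exfalso; eauto]. Qed.

Lemma eq_vertex (g : G) p q w : proj1_sig g = Some (p, q) ->
  fst p = w -> fst q = w -> snd p = [] -> snd q = [] -> g = vertex w.
Proof.
  destruct p as [x l], q as [y l']. simpl. intros Eg -> -> -> ->. apply GE_ext. exact Eg.
Qed.

(* For g = u v^{-1}, [factor true g] is u (in normal form u r(u)^{-1}) and [factor false g]
   is v; [factor_inv] gives their inverses and [range_vertex g] is r(u) = r(v). *)
Definition side (b : bool) (uv : P * P) : P := if b then fst uv else snd uv.

Definition path_elt (u : P) : raw V Ed := Some (u, (rng r u, [])).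

Definition path_inv (u : P) : raw V Ed := Some ((rng r u, []), u).

Lemma valid_side b uv : valid_raw s r (Some uv) -> valid_path s r (side b uv).
Proof. destruct uv, b; simpl; tauto. Qed.

Lemma rng_side b uv : valid_raw s r (Some uv) -> rng r (side b uv) = rng r (fst uv).
Proof. destruct uv, b; simpl; intuition. Qed.

Lemma valid_path_elt u : valid_path s r u -> valid_raw s r (path_elt u).
Proof. intro Hu. exact (conj Hu (conj I eq_refl)). Qed.

Lemma valid_path_inv u : valid_path s r u -> valid_raw s r (path_inv u).
Proof. intro Hu. exact (conj I (conj Hu eq_refl)). Qed.

Definition factor (b : bool) (g : G) : G :=
  match g with
  | exist _ (Some uv) Hg => exist _ (path_elt (side b uv)) (valid_path_elt (valid_side b Hg))
  | exist _ None _ => zero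
  end.

Definition factor_inv (b : bool) (g : G) : G :=
  match g with
  | exist _ (Some uv) Hg => exist _ (path_inv (side b uv)) (valid_path_inv (valid_side b Hg))
  | exist _ None _ => zero
  end.

Definition range_vertex (g : G) : G :=
  match proj1_sig g with Some (u, _) => vertex (rng r u) | None => zero end.

Lemma factor_inv_mul_factor b (g : G) : GE_mul (factor_inv b g) (factor b g) = range_vertex g.
Proof.
  destruct g as [[uv|] Hg]; apply GE_ext; [|reflexivity].
  rewrite GE_mul_val. simpl proj1_sig. unfold path_inv, path_elt.
  rewrite (mulraw_prefix_l (l := [])) by (rewrite ?app_nil_r; reflexivity).
  unfold range_vertex. simpl. rewrite (rng_side b Hg). destruct uv. reflexivity.
Qed.

Lemma factor_mul_factor_inv_mul (g : G) : GE_mul (factor true g) (GE_mul (factor_inv true g) g) = g.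
Proof.
  destruct g as [[[u v]|] Hg]; apply GE_ext; [|reflexivity].
  rewrite !GE_mul_val. simpl proj1_sig. unfold path_inv, path_elt, side. simpl fst.
  rewrite (mulraw_prefix_l (l := [])) by (rewrite ?app_nil_r; reflexivity).
  rewrite (mulraw_prefix_l (l := [])) by reflexivity.
  destruct u. simpl. rewrite app_nil_r. reflexivity.
Qed.

Lemma path_inv_mul_path_elt_vertex (x y : P) w :
  mulraw (path_inv x) (path_elt y) = Some ((w, []), (w, [])) -> x = y.
Proof.
  unfold path_inv, path_elt. destruct (classic (prefix x y)) as [[E [p Ep]] | Hxy].
  - rewrite (mulraw_prefix_l E Ep). simpl. intro H. injection H as _ Hp _.
    subst p. destruct x, y. simpl in *. rewrite app_nil_r in Ep. congruence.
  - destruct (classic (prefix y x)) as [[E [[|e q] Eq]] | Hyx].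
    + destruct x, y. simpl in *. rewrite app_nil_r in Eq. congruence.
    + rewrite (mulraw_prefix_r (eq_sym E) Eq) by discriminate. discriminate.
    + rewrite mulraw_incomparable by assumption. discriminate.
Qed.

Lemma factor_inv_mul_factor_vertex b (g h : G) w :
  GE_mul (factor_inv b g) (factor b h) = vertex w ->
  option_map (side b) (proj1_sig g) = option_map (side b) (proj1_sig h).
Proof.
  intro E. apply (f_equal (@proj1_sig _ _)) in E. rewrite GE_mul_val in E.
  destruct g as [[uv|] Hg], h as [[uv'|] Hh]; simpl in E |- *; try discriminate.
  f_equal. exact (path_inv_mul_path_elt_vertex E).
Qed.

Lemma GE_eq_of_sides (g h : G) :
  (forall b, option_map (side b) (proj1_sig g) = option_map (side b) (proj1_sig h)) -> g = h.
Proof.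
  intro H. apply GE_ext. pose proof (H true) as Ht. pose proof (H false) as Hf.
  destruct (proj1_sig g) as [[u v]|], (proj1_sig h) as [[u' v']|]; simpl in *; congruence.
Qed.

Lemma range_vertex_idem (g : G) : GE_mul (range_vertex g) (range_vertex g) = range_vertex g.
Proof.
  unfold range_vertex. destruct (proj1_sig g) as [[u v]|]; [apply vertex_idem | apply zero_mul].
Qed.

Lemma range_vertex_orthogonal (g h : G) : range_vertex g <> range_vertex h ->
  GE_mul (range_vertex g) (range_vertex h) = zero.
Proof.
  unfold range_vertex. destruct (proj1_sig g) as [[u v]|], (proj1_sig h) as [[u' v']|]; intro Hne.
  - apply vertex_mul_vertex_ne. intro E. apply Hne. rewrite E. reflexivity.
  - apply mul_zero.
  - apply zero_mul.
  - apply zero_mul.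
Qed.

Lemma range_vertex_cases (g : G) : range_vertex g = zero \/ exists w, range_vertex g = vertex w.
Proof. unfold range_vertex. destruct (proj1_sig g) as [[u v]|]; eauto. Qed.

End GraphInverseSemigroup.

Section VertexIsolation.
Variables (V Ed : Type) (s r : Ed -> V) (O : (GE s r -> Prop) -> Prop).
Hypothesis HO : topological_semigroup O (@GE_mul V Ed s r).

Lemma vertex_isolated w : exists U, O U /\ U (vertex s r w) /\ forall g, U g -> g = vertex s r w.
Proof.
  (* Near w, w g w <> 0 forces g = p q^{-1} with p, q starting at w. If q = e q', then
     g (e e^{-1}) is g or 0, while it must stay near w (e e^{-1}) = e e^{-1}; so q, and
     symmetrically p, is trivial. *)
  destruct HO as (HT & HH & _ & HM).
  destruct (sandwich_nbhd HH HM (a := vertex s r w) (t0 := vertex s r w) (z := zero s r))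
    as (U0 & OU0 & U0w & HU0).
  { rewrite !vertex_idem. apply vertex_neq_zero. }
  destruct (classic (exists e, s e = w)) as [[e <-] | Hsink].
  - destruct (nbhd_mul_r_neq HH HM HT (vertex_mul_edge_idem s r e)
                (vertex_neq_edge_idem (e := e) (w := s e)) (edge_idem_neq_zero (e := e)))
      as (Ur & OUr & Urw & HUr).
    destruct (nbhd_mul_r_neq HH (mul_continuous_flip HM) HT (edge_idem_mul_vertex s r e)
                (vertex_neq_edge_idem (e := e) (w := s e)) (edge_idem_neq_zero (e := e)))
      as (Ul & OUl & Ulw & HUl).
    destruct HT as (_ & _ & Hmeet & _).
    exists (fun g => U0 g /\ Ur g /\ Ul g).
    split; [apply Hmeet; [|apply Hmeet]; assumption|]. split; [auto|].
    intros g (U0g & Urg & Ulg).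
    destruct (vertex_sandwich_neq_zero (HU0 g U0g)) as (p & q & Eg & Ep & Eq).
    apply (eq_vertex Eg Ep Eq).
    + apply NNPP; intro Hp. destruct (HUl g Ulg) as [Hne Hnz].
      destruct (edge_idem_mul Eg Ep Hp); contradiction.
    + apply NNPP; intro Hq. destruct (HUr g Urg) as [Hne Hnz].
      destruct (mul_edge_idem Eg Eq Hq); contradiction.
  - exists U0. split; [exact OU0|]. split; [exact U0w|].
    intros g U0g.
    destruct (vertex_sandwich_neq_zero (HU0 g U0g)) as (p & q & Eg & Ep & Eq).
    pose proof (proj2_sig g) as Hg. rewrite Eg in Hg. destruct Hg as (Hp & Hq & _).
    apply (eq_vertex Eg Ep Eq).
    + apply (valid_path_at_sink Hp). rewrite Ep. exact Hsink.
    + apply (valid_path_at_sink Hq). rewrite Eq. exact Hsink.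
Qed.

End VertexIsolation.

Section ClosedImage.
Variables (V Ed : Type) (s r : Ed -> V).
Variables (S : Type) (OS : (S -> Prop) -> Prop) (mS : S -> S -> S) (f : GE s r -> S).
Hypotheses (HS : topological_semigroup OS mS) (HC : compact OS)
  (Hhom : forall g h, f (GE_mul g h) = mS (f g) (f h))
  (Hiso : forall w, exists N, OS N /\ N (f (vertex s r w)) /\
                              forall g, N (f g) -> g = vertex s r w).

Let HT : is_topology OS := proj1 HS.
Let HH : hausdorff OS := proj1 (proj2 HS).
Let Hassoc : forall a b c, mS a (mS b c) = mS (mS a b) c := proj1 (proj2 (proj2 HS)).
Let HM : mul_continuous OS mS := proj2 (proj2 (proj2 HS)).

Lemma tends_range_vertex (F : (GE s r -> Prop) -> Prop) b p q : proper_filter F ->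
  tends OS F (fun g => f (factor b g)) p -> tends OS F (fun g => f (factor_inv b g)) q ->
  tends OS F (fun g => f (range_vertex g)) (mS q p).
Proof.
  intros HF Hp Hq. apply (tends_ext HF (phi := fun g => mS (f (factor_inv b g)) (f (factor b g)))).
  - intro g. rewrite <- Hhom, factor_inv_mul_factor. reflexivity.
  - exact (tends_mul HM HF Hq Hp).
Qed.

Lemma limit_is_vertex (F : (GE s r -> Prop) -> Prop) x p q : proper_filter F ->
  tends OS F f x -> x <> f (zero s r) ->
  tends OS F (fun g => f (factor true g)) p -> tends OS F (fun g => f (factor_inv true g)) q ->
  exists w, mS q p = f (vertex s r w).
Proof.
  intros HF Hx Hx0 Hp Hq.
  assert (Hpqx : x = mS p (mS q x)).
  { apply (tends_unique HH HF Hx).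
    apply (tends_ext HF
             (phi := fun g => mS (f (factor true g)) (mS (f (factor_inv true g)) (f g)))).
    - intro g. rewrite <- !Hhom, factor_mul_factor_inv_mul. reflexivity.
    - exact (tends_mul HM HF Hp (tends_mul HM HF Hq Hx)). }
  assert (Hqp0 : mS q p <> f (zero s r)).
  { intro E. apply Hx0.
    assert (Hx' : x = mS p (mS (mS q p) (mS q x))) by (rewrite <- Hassoc, <- Hpqx; exact Hpqx).
    rewrite Hx', E.
    rewrite (adherent_left_zero HH HM Hhom (@zero_mul _ _ s r)).
    - exact (adherent_right_zero HH HM Hhom (@mul_zero _ _ s r)
               (adherent_comp (tends_adherent HF Hp))).
    - exact (adherent_mul HM Hhom (adherent_comp (tends_adherent HF Hq)) (tends_adherent HF Hx)). }
  assert (Hidem : forall g, mS (f (range_vertex g)) (f (range_vertex g)) = f (range_vertex g))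
    by (intro g; rewrite <- Hhom, range_vertex_idem; reflexivity).
  assert (Horth : forall g h, f (range_vertex g) <> f (range_vertex h) ->
                    mS (f (range_vertex g)) (f (range_vertex h)) = f (zero s r)).
  { intros g h Hne. rewrite <- Hhom, range_vertex_orthogonal; [reflexivity|].
    intro E. apply Hne. rewrite E. reflexivity. }
  destruct (tends_orthogonal_idempotents HH HM HF Hidem Horth (tends_range_vertex HF Hp Hq) Hqp0)
    as [g Hg].
  destruct (range_vertex_cases g) as [E | [w E]]; rewrite E in Hg; [contradiction | eauto].
Qed.

Lemma side_eventually_constant (F : (GE s r -> Prop) -> Prop) b p q w : proper_filter F ->
  tends OS F (fun g => f (factor b g)) p -> tends OS F (fun g => f (factor_inv b g)) q ->
  mS q p = f (vertex s r w) ->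
  exists A, F A /\ forall g h, A g -> A h ->
    option_map (side b) (proj1_sig g) = option_map (side b) (proj1_sig h).
Proof.
  intros HF Hp Hq E. destruct (Hiso w) as (N & ON & Nw & HN). rewrite <- E in Nw.
  destruct (tends_mul_pairs HM Hq Hp ON Nw) as (A & B & FA & FB & HAB).
  exists (fun g => A g /\ B g). split; [exact (filterI HF FA FB)|].
  intros g h [Ag _] [_ Bh]. apply (factor_inv_mul_factor_vertex (w := w)).
  apply HN. rewrite Hhom. exact (HAB g h Ag Bh).
Qed.

Lemma image_closed x : adherent OS f x -> exists g, f g = x.
Proof.
  intro Hx. apply NNPP; intro Hnot.
  assert (Hx0 : x <> f (zero s r)) by (intro E; apply Hnot; eauto).
  destruct (compact_refine_list
              [fun g => f (factor true g); fun g => f (factor_inv true g);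
               fun g => f (factor false g); fun g => f (factor_inv false g)]
              HT HC (trace_nbhd_proper HT Hx)) as (F & HF & Hfiner & Hlim).
  pose proof (tends_finer Hfiner (tends_trace_nbhd (OT := OS) f (t := x))) as Hf.
  assert (Hsides : forall b, exists p q, tends OS F (fun g => f (factor b g)) p /\
                                        tends OS F (fun g => f (factor_inv b g)) q).
  { intro b. destruct (Hlim (fun g => f (factor b g))) as [p Hp]; [destruct b; simpl; tauto|].
    destruct (Hlim (fun g => f (factor_inv b g))) as [q Hq]; [destruct b; simpl; tauto|]. eauto. }
  destruct (Hsides true) as (p & q & Hp & Hq).
  destruct (limit_is_vertex HF Hf Hx0 Hp Hq) as [w Hw].
  assert (Hconst : forall b, exists A, F A /\ forall g h, A g -> A h ->
                     option_map (side b) (proj1_sig g) = option_map (side b) (proj1_sig h)).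
  { intro b. destruct (Hsides b) as (p' & q' & Hp' & Hq').
    apply (side_eventually_constant (w := w) HF Hp' Hq'). rewrite <- Hw.
    exact (tends_unique HH HF (tends_range_vertex HF Hp' Hq') (tends_range_vertex HF Hp Hq)). }
  destruct (Hconst true) as (A1 & FA1 & H1), (Hconst false) as (A2 & FA2 & H2).
  destruct (filter_ex HF (filterI HF FA1 FA2)) as [g0 [A1g0 A2g0]].
  apply Hnot. exists g0. symmetry.
  apply (tends_eventually_const HH HF (filterI HF FA1 FA2) (phi := f)); [|exact Hf].
  intros h [A1h A2h]. f_equal. apply GE_eq_of_sides. intros []; auto.
Qed.

End ClosedImage.

Theorem corollary5p1 (V Ed : Type) (s r : Ed -> V)
    (O : (GE s r -> Prop) -> Prop)
    (HO : topological_semigroup O (@GE_mul V Ed s r)) :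
  embeds_into_compact_semigroup O (@GE_mul V Ed s r) <-> compact O.
Proof.
  split.
  - intros (S & OS & mS & f & HS & HC & _ & Hhom & _ & Hsub).
    apply (compact_of_closed_embedding HC Hsub).
    apply (image_closed HS HC Hhom).
    intro w. destruct (vertex_isolated HO w) as (U & OU & Uw & HU).
    destruct (Hsub U OU) as (N & ON & HN).
    exists N. split; [exact ON|]. split; [apply HN, Uw|].
    intros g Ng. apply HU, HN, Ng.
  - intro HC. exists (GE s r), O, (@GE_mul V Ed s r), (fun g => g).
    split; [exact HO|]. split; [exact HC|].
    split; [auto|]. split; [auto|]. split; [auto|].
    intros U OU. exists U. split; [exact OU|]. tauto.
Qed.
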